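(* Let $\mathbf{A}\in\mathbb{R}^{m\times n}$ with $\|\mathbf{A}\|_\infty\le1$, let $\rho>0$, and let $r(x,y)=\rho\sum_{i\in[m]}x_i\log x_i+\frac1\rho x^\top|\mathbf{A}|(y\circ y)$. Let $\delta>0$, let $\bar{x}\in\Delta^m$ have strictly positive entries, let $y\in[0,1]^n$, and let $x=\mathcal{O}_\delta(\bar{x})$. Set $\bar z=(\bar x,y)$ and $z=(x,y)$. Then for every $w\in\Delta^m\times[0,1]^n$, $$V^r_z(w)-V^r_{\bar z}(w)\le\Big(\rho+\frac8\rho\Big)m\delta.$$
   Context: Padding oracle: for $\delta>0$ and $\bar x\in\Delta^m$, $\mathcal{O}_\delta(\bar x)=\hat x/\|\hat x\|_1$ where $\hat x_i=\max(\bar x_i,\delta)$. $V^r_{z'}(w)=r(w)-r(z')-\langle\nabla r(z'),w-z'\rangle$ is the Bregman divergence, with the convention $0\log 0=0$. $\|\mathbf{A}\|_\infty=\max_i\sum_j|\mathbf{A}_{ij}|$; $|\mathbf{A}|$ is entrywise absolute value and $y\circ y$ the entrywise square; $\Delta^m$ is the probability simplex. *)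

From HB Require Import structures.
From mathcomp Require Import all_boot all_order all_algebra.
From mathcomp Require Import all_classical all_reals all_analysis.
Set Implicit Arguments. Unset Strict Implicit. Unset Printing Implicit Defensive.
Import Order.TTheory GRing.Theory Num.Theory.
Local Open Scope ring_scope.

Section Defs.
Variable R : realType.

Definition normInf (m n : nat) (A : 'M[R]_(m, n)) : R :=
  \big[Num.max/0]_(i < m) \sum_(j < n) `|A i j|.

Definition simplex (m : nat) (x : 'I_m -> R) : Prop :=
  (forall i, 0 <= x i) /\ \sum_(i < m) x i = 1.

Definition unit_box (n : nat) (y : 'I_n -> R) : Prop :=
  forall j, 0 <= y j <= 1.

Definition pad (m : nat) (delta : R) (xbar : 'I_m -> R) : 'I_m -> R :=
  fun i => Num.max (xbar i) delta / \sum_(k < m) Num.max (xbar k) delta.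

(* r(x,y) = rho sum_i x_i log x_i + (1/rho) x^T |A| (y o y);
   note ln 0 = 0 in MathComp-Analysis, giving the convention 0 log 0 = 0. *)
Definition rfun (m n : nat) (A : 'M[R]_(m, n)) (rho : R)
    (x : 'I_m -> R) (y : 'I_n -> R) : R :=
  rho * \sum_(i < m) x i * ln (x i)
  + rho^-1 * \sum_(i < m) \sum_(j < n) x i * `|A i j| * (y j ^+ 2).

(* partial derivatives of r (valid at points with x > 0) *)
Definition grad_x (m n : nat) (A : 'M[R]_(m, n)) (rho : R)
    (x : 'I_m -> R) (y : 'I_n -> R) (i : 'I_m) : R :=
  rho * (ln (x i) + 1) + rho^-1 * \sum_(j < n) `|A i j| * (y j ^+ 2).

Definition grad_y (m n : nat) (A : 'M[R]_(m, n)) (rho : R)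
    (x : 'I_m -> R) (y : 'I_n -> R) (j : 'I_n) : R :=
  rho^-1 * (2 * \sum_(i < m) x i * `|A i j| * y j).

Definition breg (m n : nat) (A : 'M[R]_(m, n)) (rho : R)
    (x' : 'I_m -> R) (y' : 'I_n -> R) (x : 'I_m -> R) (y : 'I_n -> R) : R :=
  rfun A rho x y - rfun A rho x' y'
  - (\sum_(i < m) grad_x A rho x' y' i * (x i - x' i)
     + \sum_(j < n) grad_y A rho x' y' j * (y j - y' j)).

End Defs.

From HB Require Import structures.
From mathcomp Require Import all_boot all_order all_algebra.
From mathcomp Require Import all_classical all_reals all_analysis.
From mathcomp Require Import ring lra.
Import Order.TTheory GRing.Theory Num.Theory.
Set Implicit Arguments. Unset Strict Implicit.
Local Open Scope ring_scope.

(* The coupling term of r is linear in x and the affine part of the entropy only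
   sees the mass of x, so for two simplex points with the same y the difference of
   the Bregman divergences reduces to rho <w, ln xbar - ln x> plus a y-gradient
   term linear in xbar - x.  With S = sum_i max(xbar_i, delta) in [1, 1 + m delta]
   we have x_i >= xbar_i / S, so the first part is at most rho ln S <= rho (S - 1),
   and the second is at most (2/rho) ||A||_oo ||xbar - x||_1 <= (4/rho) (S - 1).
   The bound thus even holds with 4/rho in place of 8/rho. *)

Section BregmanDifference.
Variables (R : realType) (m n : nat) (A : 'M[R]_(m, n)) (rho : R).

Definition coupling (y : 'I_n -> R) (i : 'I_m) : R :=
  \sum_(j < n) `|A i j| * y j ^+ 2.

Lemma sum_coupling (v : 'I_m -> R) (y : 'I_n -> R) :
  \sum_(i < m) \sum_(j < n) v i * `|A i j| * y j ^+ 2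
  = \sum_(i < m) v i * coupling y i.
Proof.
by apply: eq_bigr => i _; rewrite mulr_sumr; apply: eq_bigr => j _; exact/esym/mulrA.
Qed.

Lemma rfun_tangent_x (x w : 'I_m -> R) (y : 'I_n -> R) :
  rfun A rho x y + \sum_(i < m) grad_x A rho x y i * (w i - x i)
  = rho * \sum_(i < m) w i * ln (x i) + rho * (\sum_(i < m) w i - \sum_(i < m) x i)
    + rho^-1 * \sum_(i < m) w i * coupling y i.
Proof.
rewrite /rfun !sum_coupling.
rewrite (_ : \sum_(i < m) grad_x A rho x y i * (w i - x i)
  = \sum_(i < m) (rho * (ln (x i) + 1) + rho^-1 * coupling y i) * (w i - x i)) //.
rewrite -!sumrB !mulr_sumr -!big_split /=.
by apply: eq_bigr => i _; ring.
Qed.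

Lemma breg_sub_same_y (x x' w1 : 'I_m -> R) (y w2 : 'I_n -> R) :
  \sum_(i < m) x' i = \sum_(i < m) x i ->
  breg A rho x' y w1 w2 - breg A rho x y w1 w2
  = rho * \sum_(i < m) w1 i * (ln (x i) - ln (x' i))
    + \sum_(j < n) (grad_y A rho x y j - grad_y A rho x' y j) * (w2 j - y j).
Proof.
move=> mass_eq.
have tangent_diff := congr2 (fun a b => a - b)
  (rfun_tangent_x x w1 y) (rfun_tangent_x x' w1 y); rewrite /= mass_eq in tangent_diff.
rewrite /breg.
rewrite (_ : \sum_(i < m) w1 i * (ln (x i) - ln (x' i))
  = \sum_(i < m) w1 i * ln (x i) - \sum_(i < m) w1 i * ln (x' i));
  last by rewrite -sumrB; apply: eq_bigr => i _; rewrite mulrBr.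
rewrite (_ : \sum_(j < n) (grad_y A rho x y j - grad_y A rho x' y j) * (w2 j - y j)
  = \sum_(j < n) grad_y A rho x y j * (w2 j - y j)
    - \sum_(j < n) grad_y A rho x' y j * (w2 j - y j));
  last by rewrite -sumrB; apply: eq_bigr => j _; rewrite mulrBl.
move: tangent_diff; lra.
Qed.

Lemma grad_yB (x x' : 'I_m -> R) (y : 'I_n -> R) (j : 'I_n) :
  grad_y A rho x y j - grad_y A rho x' y j
  = rho^-1 * 2 * \sum_(i < m) (x i - x' i) * `|A i j| * y j.
Proof.
rewrite /grad_y -mulrA -mulrBr -mulrBr -sumrB.
by congr (_ * (_ * _)); apply: eq_bigr => i _; rewrite !mulrBl.
Qed.

Lemma row_norm1_le_normInf (i : 'I_m) : \sum_(j < n) `|A i j| <= normInf A.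
Proof. exact: (le_bigmax (0 : R) (fun i => \sum_(j < n) `|A i j|) i). Qed.

Lemma grad_yB_le (x x' : 'I_m -> R) (y w2 : 'I_n -> R) :
  0 < rho -> unit_box y -> unit_box w2 ->
  \sum_(j < n) (grad_y A rho x y j - grad_y A rho x' y j) * (w2 j - y j)
  <= rho^-1 * 2 * normInf A * \sum_(i < m) `|x i - x' i|.
Proof.
move=> rho_gt0 y_box w2_box.
have c_ge0 : 0 <= rho^-1 * 2 by rewrite mulr_ge0 // invr_ge0 ltW.
under eq_bigr => j _ do rewrite grad_yB -(mulrA (rho^-1 * 2)).
rewrite -mulr_sumr -mulrA ler_wpM2l //.
apply: (@le_trans _ _ (\sum_(j < n) \sum_(i < m) `|x i - x' i| * `|A i j|)).
  apply: ler_sum => j _; rewrite mulr_suml; apply: ler_sum => i _.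
  have /andP[y0 y1] := y_box j; have /andP[w0 w1] := w2_box j.
  have step_le1 : `|y j| * `|w2 j - y j| <= 1.
    by rewrite ger0_norm //; apply: mulr_ile1 => //; rewrite ler_norml; lra.
  apply: (le_trans (ler_norm _)).
  rewrite -!mulrA !normrM normr_id mulrA -[X in _ <= X]mulr1.
  by rewrite ler_wpM2l ?mulr_ge0.
rewrite exchange_big /= mulr_sumr; apply: ler_sum => i _.
rewrite -mulr_sumr mulrC; apply: ler_wpM2r => //.
exact: row_norm1_le_normInf.
Qed.

End BregmanDifference.

Section Padding.
Variables (R : realType) (m : nat) (delta : R) (xbar : 'I_m -> R).
Hypotheses (delta_gt0 : 0 < delta) (xbar_simplex : simplex xbar).

Definition pad_mass : R := \sum_(k < m) Num.max (xbar k) delta.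

Let max_delta_gt0 i : 0 < Num.max (xbar i) delta.
Proof. by rewrite lt_max delta_gt0 orbT. Qed.

Lemma pad_mass_ge1 : 1 <= pad_mass.
Proof. by rewrite -xbar_simplex.2; apply: ler_sum => i _; rewrite le_max lexx. Qed.

Lemma pad_mass_le : pad_mass <= 1 + m%:R * delta.
Proof.
have -> : 1 + m%:R * delta = \sum_(i < m) (xbar i + delta).
  by rewrite big_split /= xbar_simplex.2 sumr_const card_ord mulr_natl.
by apply: ler_sum => i _; rewrite ge_max lerDl lerDr (ltW delta_gt0) xbar_simplex.1.
Qed.

Let pad_mass_gt0 : 0 < pad_mass.
Proof. by apply: lt_le_trans pad_mass_ge1. Qed.

Lemma sum_pad : \sum_(i < m) pad delta xbar i = 1.
Proof. by rewrite /pad -mulr_suml divff // gt_eqF. Qed.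

Lemma ln_sub_ln_pad (i : 'I_m) :
  0 < xbar i -> ln (xbar i) - ln (pad delta xbar i) <= pad_mass - 1.
Proof.
move=> xbar_gt0; rewrite /pad ln_div ?posrE // -/pad_mass.
have : ln (xbar i) <= ln (Num.max (xbar i) delta) by rewrite ler_ln ?posrE // le_max lexx.
have := @le_ln1Dx _ (pad_mass - 1); rewrite [1 + _]addrC subrK.
have := pad_mass_ge1; lra.
Qed.

Lemma pad_l1_dist :
  \sum_(i < m) `|xbar i - pad delta xbar i| <= 2 * (pad_mass - 1).
Proof.
have sum_shift : \sum_(i < m) (Num.max (xbar i) delta - xbar i) = pad_mass - 1.
  by rewrite sumrB -xbar_simplex.2.
have sum_shrink : \sum_(i < m) (Num.max (xbar i) delta - pad delta xbar i) = pad_mass - 1.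
  by rewrite sumrB sum_pad.
rewrite mulr2n mulrDl mul1r -[X in _ <= X + _]sum_shift -sum_shrink -big_split.
apply: ler_sum => i _.
rewrite (_ : xbar i - _ = (xbar i - Num.max (xbar i) delta)
  + (Num.max (xbar i) delta - pad delta xbar i)); last by ring.
apply: (le_trans (ler_normD _ _)); rewrite distrC.
rewrite ger0_norm ?subr_ge0 ?le_max ?lexx // ger0_norm ?subr_ge0 //.
by rewrite /pad -/pad_mass ler_pdivrMr // ler_pMr // pad_mass_ge1.
Qed.

End Padding.

Lemma simplex_wsum_le (R : realType) (m : nat) (w f : 'I_m -> R) (c : R) :
  simplex w -> (forall i, f i <= c) -> \sum_(i < m) w i * f i <= c.
Proof.
move=> [w_ge0 w_sum] f_le.
rewrite -[X in _ <= X]mul1r -w_sum mulr_suml.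
by apply: ler_sum => i _; rewrite ler_wpM2l.
Qed.

Theorem mainTheorem3 (R : realType) (m n : nat) (A : 'M[R]_(m, n)) (rho delta : R)
    (xbar : 'I_m -> R) (y : 'I_n -> R) (w1 : 'I_m -> R) (w2 : 'I_n -> R) :
  normInf A <= 1 -> 0 < rho -> 0 < delta ->
  simplex xbar -> (forall i, 0 < xbar i) -> unit_box y ->
  simplex w1 -> unit_box w2 ->
  breg A rho (pad delta xbar) y w1 w2 - breg A rho xbar y w1 w2
    <= (rho + 8 / rho) * m%:R * delta.
Proof.
move=> A_le1 rho_gt0 delta_gt0 xbar_sx xbar_gt0 y_box w1_sx w2_box.
rewrite breg_sub_same_y; last by rewrite sum_pad // xbar_sx.2.
set s := pad_mass delta xbar - 1.
have s_ge0 : 0 <= s by rewrite subr_ge0 pad_mass_ge1.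
have s_le : s <= m%:R * delta by have := pad_mass_le delta_gt0 xbar_sx; rewrite /s; lra.
have ln_part := simplex_wsum_le w1_sx (fun i => ln_sub_ln_pad delta_gt0 xbar_sx (xbar_gt0 i)).
rewrite -/s in ln_part.
have k_gt0 : 0 < rho^-1 by rewrite invr_gt0.
have y_part : \sum_(j < n) (grad_y A rho xbar y j - grad_y A rho (pad delta xbar) y j)
    * (w2 j - y j) <= rho^-1 * 2 * 1 * (2 * s).
  apply: (le_trans (grad_yB_le A xbar (pad delta xbar) rho_gt0 y_box w2_box)).
  have two_k_ge0 : 0 <= rho^-1 * 2 by rewrite mulr_ge0 // ltW.
  apply: ler_pM.
  - by rewrite mulr_ge0 // bigmax_ge_id.
  - by rewrite sumr_ge0.
  - by rewrite ler_wpM2l.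
  - exact: pad_l1_dist.
have := ler_wpM2l (ltW rho_gt0) ln_part.
have := ler_wpM2l (ltW rho_gt0) s_le.
have := ler_wpM2l (ltW k_gt0) s_le.
have := mulr_ge0 (ltW k_gt0) s_ge0.
rewrite -mulrA; lra.
Qed.
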